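(* Let $r\in(0,1)$, $b\in(-1,1)$, $\lambda(r)=\ln\frac{1+r}{1-r}$ and $a=\tan\frac{b\pi}{4}$. Let $\overline{S}_{\lambda(r)}(b)=\{z\in\mathbb{S}: d_{\mathbb{S}}(z,b)\leqslant\lambda(r)\}$. Then $$\{\operatorname{Re} z: z\in\overline{S}_{\lambda(r)}(b)\}=[m_b(r),M_b(r)],$$ where $m_b(r)=\frac{4}{\pi}\arctan\frac{a-r}{1-ar}$ and $M_b(r)=\frac{4}{\pi}\arctan\frac{a+r}{1+ar}$.
   Context: $\mathbb{S}=\{z\in\mathbb{C}:-1<\operatorname{Re} z<1\}$. The hyperbolic density of $\mathbb{S}$ is $\rho_{\mathbb{S}}(z)=\frac{\pi}{2}\big/\cos\left(\frac{\pi}{2}\operatorname{Re} z\right)$ and $d_{\mathbb{S}}(z_1,z_2)=\inf_\gamma\int_\gamma\rho_{\mathbb{S}}(z)|dz|$ over $C^1$ curves $\gamma$ in $\mathbb{S}$ joining $z_1$ to $z_2$. *)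

(* Points of C are represented as pairs (x,y) of reals, z = x + i y. *)
From Stdlib Require Import Reals.
From Coquelicot Require Import Coquelicot.
Open Scope R_scope.

Definition in_strip (x y : R) : Prop := -1 < x < 1.

Definition rho_S (x : R) : R := (PI / 2) / cos (PI / 2 * x).

Definition C1_on01 (g : R -> R) : Prop :=
  forall t, 0 <= t <= 1 -> ex_derive g t /\ continuous (Derive g) t.

Definition admissible (x1 y1 x2 y2 : R) (gx gy : R -> R) : Prop :=
  C1_on01 gx /\ C1_on01 gy /\
  (forall t, 0 <= t <= 1 -> in_strip (gx t) (gy t)) /\
  gx 0 = x1 /\ gy 0 = y1 /\ gx 1 = x2 /\ gy 1 = y2.

Definition hyp_length (gx gy : R -> R) : R :=
  RInt (fun t => rho_S (gx t) * sqrt (Derive gx t ^ 2 + Derive gy t ^ 2)) 0 1.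

Definition dS (x1 y1 x2 y2 : R) : Rbar :=
  Glb_Rbar (fun l => exists gx gy, admissible x1 y1 x2 y2 gx gy /\ l = hyp_length gx gy).

(* The density rho_S depends only on Re z and has the explicit primitive
   F(x) = ln ((1 + sin (pi x / 2)) / cos (pi x / 2)) = lambda (tan (pi x / 4)).
   Along any curve, rho_S |dz| >= rho_S |d Re z|, so by the fundamental theorem
   of calculus d_S(z, b) >= |F(Re z) - F(b)|, with equality on the horizontal
   segment from Re z to b.  Hence Re z ranges exactly over the x with
   |F x - F b| <= lambda r, and since F is increasing and lambda satisfies the
   addition law lambda ((a + r) / (1 + a r)) = lambda a + lambda r, the endpoints
   are the x with tan (pi x / 4) = (a -+ r) / (1 -+ a r). *)

From Stdlib Require Import Reals Lra Psatz.
From Coquelicot Require Import Coquelicot.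
Open Scope R_scope.

Lemma strip_cos_pos x : -1 < x < 1 -> 0 < cos (PI / 2 * x).
Proof. intros Hx. pose proof PI_RGT_0. apply cos_gt_0; nra. Qed.

Lemma strip_one_add_sin_pos x : -1 < x < 1 -> 0 < 1 + sin (PI / 2 * x).
Proof.
  intros Hx. pose proof PI_RGT_0.
  assert (Hs : sin (- (PI / 2)) < sin (PI / 2 * x)) by (apply sin_increasing_1; nra).
  rewrite sin_neg, sin_PI2 in Hs. lra.
Qed.

Lemma rho_S_pos x : -1 < x < 1 -> 0 < rho_S x.
Proof.
  intros Hx. pose proof PI_RGT_0. pose proof (strip_cos_pos x Hx).
  unfold rho_S. apply Rdiv_lt_0_compat; lra.
Qed.

Lemma continuous_rho_S x : -1 < x < 1 -> continuous rho_S x.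
Proof.
  intros Hx. pose proof (strip_cos_pos x Hx).
  apply (ex_derive_continuous (V := R_NormedModule)). unfold rho_S. auto_derive. lra.
Qed.

Lemma continuous_rho_S_comp (g : R -> R) t : ex_derive g t -> -1 < g t < 1 ->
  continuous (fun t => rho_S (g t)) t.
Proof.
  intros Hd Hg. apply (continuous_comp g rho_S).
  - now apply (ex_derive_continuous (V := R_NormedModule)).
  - now apply continuous_rho_S.
Qed.

Definition rho_S_prim (x : R) : R := ln ((1 + sin (PI / 2 * x)) / cos (PI / 2 * x)).

Lemma is_derive_rho_S_prim x : -1 < x < 1 -> is_derive rho_S_prim x (rho_S x).
Proof.
  intros Hx. pose proof (strip_cos_pos x Hx). pose proof (strip_one_add_sin_pos x Hx).
  pose proof (sin2_cos2 (PI / 2 * x)) as Hpyth. unfold Rsqr in Hpyth.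
  unfold rho_S_prim, rho_S. auto_derive.
  - repeat split; try lra. apply Rdiv_lt_0_compat; lra.
  - set (s := sin (PI / 2 * x)) in *. set (c := cos (PI / 2 * x)) in *.
    transitivity (PI / 2 * (s * s + c * c + s) / (c * (1 + s))); [field; lra|].
    rewrite Hpyth. field. lra.
Qed.

Definition lambda (t : R) : R := ln ((1 + t) / (1 - t)).

Lemma div_in_unit_interval n d : 0 < d -> -d < n < d -> -1 < n / d < 1.
Proof. intros. assert (n / d * d = n) by (field; lra). split; nra. Qed.

Lemma lambda_increasing t t' : -1 < t -> t < t' -> t' < 1 -> lambda t < lambda t'.
Proof.
  intros. unfold lambda. apply ln_increasing.
  - apply Rdiv_lt_0_compat; lra.
  - assert ((1 + t') / (1 - t') - (1 + t) / (1 - t) = 2 * (t' - t) / ((1 - t) * (1 - t')))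
      by (field; lra).
    assert (0 < 2 * (t' - t) / ((1 - t) * (1 - t'))) by (apply Rdiv_lt_0_compat; nra).
    lra.
Qed.

Lemma lambda_add a r : -1 < a < 1 -> -1 < r < 1 ->
  -1 < (a + r) / (1 + a * r) < 1 /\ lambda ((a + r) / (1 + a * r)) = lambda a + lambda r.
Proof.
  intros. assert (0 < 1 + a * r) by nra. split.
  - apply div_in_unit_interval; nra.
  - unfold lambda. rewrite <- ln_mult by (apply Rdiv_lt_0_compat; lra).
    f_equal. field. repeat split; nra.
Qed.

Lemma lambda_opp t : -1 < t < 1 -> lambda (- t) = - lambda t.
Proof.
  intros. unfold lambda. rewrite <- ln_Rinv by (apply Rdiv_lt_0_compat; lra).
  f_equal. field. lra.
Qed.

Lemma lambda_sub a r : -1 < a < 1 -> -1 < r < 1 ->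
  -1 < (a - r) / (1 - a * r) < 1 /\ lambda ((a - r) / (1 - a * r)) = lambda a - lambda r.
Proof.
  intros. replace (a - r) with (a + - r) by ring. replace (1 - a * r) with (1 + a * - r) by ring.
  replace (lambda a - lambda r) with (lambda a + lambda (- r)) by (rewrite lambda_opp by lra; ring).
  apply lambda_add; lra.
Qed.

Lemma tan_quarter_strip x : -1 < x < 1 -> -1 < tan (x * PI / 4) < 1.
Proof.
  intros. pose proof PI_RGT_0.
  assert (tan (- (PI / 4)) < tan (x * PI / 4) < tan (PI / 4)) by (split; apply tan_increasing; nra).
  rewrite tan_neg, tan_PI4 in *. lra.
Qed.

(* Double-angle formulas in [x pi / 4]: (1 + sin 2u) / cos 2u = (c + s) / (c - s)
   for s = sin u, c = cos u. *)
Lemma rho_S_prim_lambda_tan x : -1 < x < 1 -> rho_S_prim x = lambda (tan (x * PI / 4)).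
Proof.
  intros Hx. pose proof (tan_quarter_strip x Hx) as Ht.
  assert (Hc : 0 < cos (x * PI / 4)) by (pose proof PI_RGT_0; apply cos_gt_0; nra).
  unfold rho_S_prim, lambda. replace (PI / 2 * x) with (2 * (x * PI / 4)) by field.
  rewrite sin_2a, cos_2a. unfold tan in *.
  pose proof (sin2_cos2 (x * PI / 4)) as Hpyth. unfold Rsqr in Hpyth.
  set (s := sin (x * PI / 4)) in *. set (c := cos (x * PI / 4)) in *.
  assert (Hsc : - c < s < c).
  { replace s with (s / c * c) by (field; lra). nra. }
  f_equal. replace (1 + 2 * s * c) with ((s + c) * (s + c)) by (rewrite <- Hpyth; ring).
  field. repeat split; nra.
Qed.

Lemma rho_S_prim_increasing x y : -1 < x -> x < y -> y < 1 -> rho_S_prim x < rho_S_prim y.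
Proof.
  intros. pose proof PI_RGT_0.
  rewrite !rho_S_prim_lambda_tan by lra.
  apply lambda_increasing.
  - apply tan_quarter_strip; lra.
  - apply tan_increasing; nra.
  - apply tan_quarter_strip; lra.
Qed.

Lemma rho_S_prim_le x y : -1 < x < 1 -> -1 < y < 1 ->
  rho_S_prim x <= rho_S_prim y <-> x <= y.
Proof.
  intros. split; intros Hxy.
  - destruct (Rle_lt_dec x y) as [|Hyx]; [assumption|].
    pose proof (rho_S_prim_increasing y x). lra.
  - destruct (Rle_lt_or_eq_dec x y Hxy) as [Hlt|<-]; [|lra].
    left. apply rho_S_prim_increasing; lra.
Qed.

Lemma rho_S_prim_atan p : -1 < p < 1 ->
  -1 < 4 / PI * atan p < 1 /\ rho_S_prim (4 / PI * atan p) = lambda p.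
Proof.
  intros Hp. pose proof PI_RGT_0.
  assert (atan (- (1)) < atan p < atan 1) by (split; apply atan_increasing; lra).
  rewrite atan_opp, atan_1 in *.
  assert (Hx : -1 < 4 / PI * atan p < 1).
  { replace (4 / PI * atan p) with (4 * atan p / PI) by (field; lra).
    apply div_in_unit_interval; lra. }
  split; [exact Hx|].
  rewrite rho_S_prim_lambda_tan by exact Hx.
  replace (4 / PI * atan p * PI / 4) with (atan p) by (field; lra).
  now rewrite tan_atan.
Qed.

Lemma is_RInt_rho_S_prim gx : C1_on01 gx -> (forall t, 0 <= t <= 1 -> -1 < gx t < 1) ->
  is_RInt (fun t => rho_S (gx t) * Derive gx t) 0 1 (rho_S_prim (gx 1) - rho_S_prim (gx 0)).
Proof.
  intros HC Hs.
  assert (HFTC := is_RInt_derive (fun t => rho_S_prim (gx t))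
                    (fun t => rho_S (gx t) * Derive gx t) 0 1).
  rewrite Rmin_left, Rmax_right in HFTC by lra.
  apply HFTC; intros t Ht; destruct (HC t Ht) as [Hd Hc].
  - rewrite Rmult_comm. apply (is_derive_comp rho_S_prim gx).
    + now apply is_derive_rho_S_prim, Hs.
    + now apply Derive_correct.
  - apply (continuous_mult (fun t => rho_S (gx t)) (Derive gx)); [|exact Hc].
    now apply continuous_rho_S_comp, Hs.
Qed.

Lemma ex_RInt_hyp_length gx gy : C1_on01 gx -> C1_on01 gy ->
  (forall t, 0 <= t <= 1 -> -1 < gx t < 1) ->
  ex_RInt (fun t => rho_S (gx t) * sqrt (Derive gx t ^ 2 + Derive gy t ^ 2)) 0 1.
Proof.
  intros HCx HCy Hs. apply (ex_RInt_continuous (V := R_CompleteNormedModule)).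
  rewrite Rmin_left, Rmax_right by lra. intros t Ht.
  destruct (HCx t Ht) as [Hdx Hcx], (HCy t Ht) as [_ Hcy].
  assert (Hsq : forall g, continuous g t -> continuous (fun t => g t ^ 2) t).
  { intros g Hg. apply (continuous_comp g (fun x => x ^ 2)); [exact Hg|].
    apply (ex_derive_continuous (V := R_NormedModule)). auto_derive. exact I. }
  apply (continuous_mult (fun t => rho_S (gx t))).
  - now apply continuous_rho_S_comp, Hs.
  - apply continuous_sqrt_comp, (continuous_plus (fun t => Derive gx t ^ 2)); now apply Hsq.
Qed.

Lemma hyp_length_ge x1 y1 x2 y2 gx gy : admissible x1 y1 x2 y2 gx gy ->
  Rabs (rho_S_prim x2 - rho_S_prim x1) <= hyp_length gx gy.
Proof.
  intros (HCx & HCy & Hs & Hx0 & _ & Hx1 & _).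
  assert (Hs' : forall t, 0 <= t <= 1 -> -1 < gx t < 1) by (intros; now apply Hs).
  pose proof (is_RInt_rho_S_prim gx HCx Hs') as Hprim. rewrite Hx0, Hx1 in Hprim.
  unfold hyp_length.
  apply (norm_RInt_le _ (fun t => rho_S (gx t) * sqrt (Derive gx t ^ 2 + Derive gy t ^ 2))
           0 1 _ _ ltac:(lra)) with (2 := Hprim).
  - intros t Ht. change (norm ?v) with (Rabs v).
    pose proof (rho_S_pos (gx t) (Hs' t Ht)).
    rewrite Rabs_mult, (Rabs_pos_eq (rho_S _)) by lra.
    apply Rmult_le_compat_l; [lra|].
    rewrite <- sqrt_Rsqr_abs. apply sqrt_le_1_alt. unfold Rsqr. nra.
  - apply (RInt_correct (V := R_CompleteNormedModule)), ex_RInt_hyp_length; assumption.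
Qed.

Lemma dS_ge x1 y1 x2 y2 :
  Rbar_le (Finite (Rabs (rho_S_prim x2 - rho_S_prim x1))) (dS x1 y1 x2 y2).
Proof.
  unfold dS. apply Glb_Rbar_correct.
  intros l (gx & gy & Hadm & ->). simpl. exact (hyp_length_ge x1 y1 x2 y2 gx gy Hadm).
Qed.

Definition segment (p q t : R) : R := p + t * (q - p).

Lemma Derive_segment p q t : Derive (segment p q) t = q - p.
Proof. apply is_derive_unique. unfold segment. auto_derive; [exact I | ring]. Qed.

Lemma C1_on01_segment p q : C1_on01 (segment p q).
Proof.
  intros t _. split.
  - unfold segment. auto_derive. exact I.
  - apply (continuous_ext (fun _ => q - p)); [intros; now rewrite Derive_segment|].
    apply continuous_const.
Qed.

Lemma admissible_segment x1 y1 x2 y2 : in_strip x1 y1 -> in_strip x2 y2 ->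
  admissible x1 y1 x2 y2 (segment x1 x2) (segment y1 y2).
Proof.
  intros H1 H2. unfold in_strip in *.
  split; [apply C1_on01_segment|]. split; [apply C1_on01_segment|].
  unfold segment. split.
  - intros t Ht. destruct (Rle_dec x1 x2); split; nra.
  - repeat split; ring.
Qed.

Lemma hyp_length_horizontal_segment x1 x2 y : -1 < x1 < 1 -> -1 < x2 < 1 ->
  hyp_length (segment x1 x2) (segment y y) <= Rabs (rho_S_prim x2 - rho_S_prim x1).
Proof.
  intros H1 H2.
  (* The length integrand is [s] times the integrand of [is_RInt_rho_S_prim]. *)
  assert (Hsign : exists s, Rabs s = 1 /\ Rabs (x2 - x1) = s * (x2 - x1)).
  { destruct (Rcase_abs (x2 - x1)) as [Hn|Hp].
    - exists (-1). rewrite Rabs_m1, Rabs_left by exact Hn. split; [reflexivity | ring].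
    - exists 1. rewrite Rabs_R1, Rabs_right by exact Hp. split; [reflexivity | ring]. }
  destruct Hsign as (s & Hs1 & Hs).
  destruct (admissible_segment x1 y x2 y H1 H2) as (HC & _ & Hstrip & Hx0 & _ & Hx1 & _).
  pose proof (is_RInt_rho_S_prim _ HC (fun t Ht => Hstrip t Ht)) as Hprim.
  rewrite Hx0, Hx1 in Hprim.
  assert (Hscaled : is_RInt (fun t => s * (rho_S (segment x1 x2 t) * Derive (segment x1 x2) t))
                      0 1 (s * (rho_S_prim x2 - rho_S_prim x1)))
    by exact (is_RInt_scal _ _ _ s _ Hprim).
  unfold hyp_length.
  rewrite (RInt_ext _ (fun t => s * (rho_S (segment x1 x2 t) * Derive (segment x1 x2) t))).
  - rewrite (is_RInt_unique _ _ _ _ Hscaled).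
    rewrite <- (Rmult_1_l (Rabs (_ - _))), <- Hs1, <- Rabs_mult. apply Rle_abs.
  - intros t _. rewrite !Derive_segment, Rminus_diag.
    replace ((x2 - x1) ^ 2 + 0 ^ 2) with (Rsqr (x2 - x1)) by (unfold Rsqr; ring).
    rewrite sqrt_Rsqr_abs, Hs. simpl. ring.
Qed.

Lemma dS_horizontal x1 x2 y : -1 < x1 < 1 -> -1 < x2 < 1 ->
  dS x1 y x2 y = Finite (Rabs (rho_S_prim x2 - rho_S_prim x1)).
Proof.
  intros H1 H2. apply Rbar_le_antisym; [|apply dS_ge].
  apply (Rbar_le_trans _ (hyp_length (segment x1 x2) (segment y y))).
  - unfold dS. apply Glb_Rbar_correct.
    exists (segment x1 x2), (segment y y). split; [now apply admissible_segment | reflexivity].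
  - now apply hyp_length_horizontal_segment.
Qed.

Theorem lemma3 (r b : R) (hr : 0 < r < 1) (hb : -1 < b < 1) :
  let lam := ln ((1 + r) / (1 - r)) in
  let a := tan (b * PI / 4) in
  forall u : R,
    (exists x y : R, in_strip x y /\ Rbar_le (dS x y b 0) (Finite lam) /\ u = x)
    <-> (4 / PI * atan ((a - r) / (1 - a * r)) <= u
         /\ u <= 4 / PI * atan ((a + r) / (1 + a * r))).
Proof.
  intros lam a u. change lam with (lambda r).
  assert (Ha : -1 < a < 1) by now apply tan_quarter_strip.
  destruct (lambda_sub a r Ha ltac:(lra)) as [Hp Hsub].
  destruct (lambda_add a r Ha ltac:(lra)) as [Hq Hadd].
  destruct (rho_S_prim_atan _ Hp) as [Hm Fm].
  destruct (rho_S_prim_atan _ Hq) as [HM FM].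
  assert (Hb : lambda a = rho_S_prim b) by exact (eq_sym (rho_S_prim_lambda_tan b hb)).
  rewrite Hsub, Hb in Fm. rewrite Hadd, Hb in FM.
  set (m := 4 / PI * atan ((a - r) / (1 - a * r))) in *.
  set (M := 4 / PI * atan ((a + r) / (1 + a * r))) in *.
  split.
  - intros (x & y & Hx & Hd & ->). unfold in_strip in Hx.
    pose proof (Rbar_le_trans _ _ _ (dS_ge x y b 0) Hd) as Hgap. simpl in Hgap.
    apply Rabs_le_between in Hgap.
    rewrite <- (rho_S_prim_le m x), <- (rho_S_prim_le x M) by assumption. lra.
  - intros Hu. assert (Hu' : -1 < u < 1) by lra.
    exists u, 0. split; [exact Hu'|]. split; [|reflexivity].
    rewrite dS_horizontal by assumption. simpl.
    rewrite <- (rho_S_prim_le m u), <- (rho_S_prim_le u M) in Hu by assumption.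
    apply Rabs_le. lra.
Qed.
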